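(* For every finite $K\ge1$, the exact sequence \[0\to\bigoplus_{i=1}^K\mathbb Z\overset{i}{\to}\bigoplus_{i=1}^K\mathbb Z[\tfrac12]\overset{\pi}{\to}\bigoplus_{i=1}^K\mathbb Z(2^\infty)\to0\] (componentwise inclusion and quotient maps) is coarsely split.
   Context: $\mathbb Z[\tfrac12]=\{m/2^k:m\in\mathbb Z,k\ge0\}$; $\mathbb Z(2^\infty)\cong\mathbb Z[\tfrac12]/\mathbb Z$. A proper left invariant metric is $d(g,h)=\|g^{-1}h\|$ for a proper norm (trivial only at identity, symmetric, subadditive, finite balls). An exact sequence $0\to A\overset{i}{\to}G\overset{\pi}{\to}Q\to0$ is coarsely split if there are proper left invariant metrics $d_A,d_G,d_Q$ and a coarse equivalence $f:(G,d_G)\to(A\oplus Q,d_A\oplus d_Q)$ ($\ell_1$ sum metric) with $f\circ i$ at bounded distance from $a\mapsto(a,0)$ and $\pi'\circ f$ at bounded distance from $\pi$, $\pi'$ the projection onto $Q$. Coarse maps: for each $\delta$ there is $\epsilon$ with $d(x,y)\le\delta\Rightarrow d(f x,f y)\le\epsilon$; coarse equivalences are coarse maps with coarse inverses up to bounded distance. *)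

From Stdlib Require Import Reals List.
From mathcomp Require Import all_boot all_order all_algebra.
Set Implicit Arguments. Unset Strict Implicit. Unset Printing Implicit Defensive.
Import Order.TTheory GRing.Theory Num.Theory.

Section Coarse.
Variable T : Type.
Variables (z : T) (add : T -> T -> T) (opp : T -> T).

Definition proper_norm (N : T -> R) : Prop :=
  [/\ (forall g, N g = R0 <-> g = z),
      (forall g, N (opp g) = N g),
      (forall g h, Rle (N (add g h)) (Rplus (N g) (N h))) &
      (forall r : R, exists l : list T, forall g, Rle (N g) r -> In g l)].

Definition norm_dist (N : T -> R) (g h : T) : R := N (add (opp g) h).
End Coarse.

Definition coarse_map {X Y : Type} (dX : X -> X -> R) (dY : Y -> Y -> R)
  (f : X -> Y) : Prop :=
  forall delta : R, exists eps : R, forall x y,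
    Rle (dX x y) delta -> Rle (dY (f x) (f y)) eps.

Definition bounded_dist {X Y : Type} (dY : Y -> Y -> R) (u v : X -> Y) : Prop :=
  exists C : R, forall x, Rle (dY (u x) (v x)) C.

Definition coarse_equivalence {X Y : Type} (dX : X -> X -> R) (dY : Y -> Y -> R)
  (f : X -> Y) : Prop :=
  coarse_map dX dY f /\
  exists g : Y -> X, coarse_map dY dX g /\
    bounded_dist dX (fun x => g (f x)) id /\ bounded_dist dY (fun y => f (g y)) id.

Definition l1_dist {X Y : Type} (dX : X -> X -> R) (dY : Y -> Y -> R)
  (p q : X * Y) : R := Rplus (dX p.1 q.1) (dY p.2 q.2).

Definition coarsely_split {A G Q : Type}
  (zA : A) (addA : A -> A -> A) (oppA : A -> A)
  (zG : G) (addG : G -> G -> G) (oppG : G -> G)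
  (zQ : Q) (addQ : Q -> Q -> Q) (oppQ : Q -> Q)
  (i : A -> G) (pi : G -> Q) : Prop :=
  exists (NA : A -> R) (NG : G -> R) (NQ : Q -> R),
    [/\ proper_norm zA addA oppA NA, proper_norm zG addG oppG NG,
        proper_norm zQ addQ oppQ NQ &
    exists f : G -> A * Q,
      let dA := norm_dist addA oppA NA in
      let dG := norm_dist addG oppG NG in
      let dQ := norm_dist addQ oppQ NQ in
      [/\ coarse_equivalence dG (l1_dist dA dQ) f,
          bounded_dist (l1_dist dA dQ) (fun a => f (i a)) (fun a => (a, zQ)) &
          bounded_dist dQ (fun g => (f g).2) pi]].

Local Open Scope ring_scope.

Definition dyadicP (q : rat) : Prop := exists k : nat, q * 2%:R ^+ k \is a Num.int.

Lemma dyadic_int (n : int) : dyadicP n%:~R.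
Proof. by exists 0%N; rewrite expr0 mulr1 rpred_int. Qed.

Lemma dyadicD q r : dyadicP q -> dyadicP r -> dyadicP (q + r).
Proof.
move=> [k hk] [l hl]; exists (k + l)%N.
rewrite exprD mulrDl mulrA (mulrC (2%:R ^+ k)) [r * _]mulrA.
by rewrite rpredD // rpredM // rpredX // rpred_nat.
Qed.

Lemma dyadicN q : dyadicP q -> dyadicP (- q).
Proof. by move=> [k hk]; exists k; rewrite mulNr rpredN. Qed.

Definition dyadic := {q : rat | dyadicP q}.
Definition dy0 : dyadic := exist _ 0 (dyadic_int 0).
Definition dyadd (x y : dyadic) : dyadic :=
  exist _ (sval x + sval y) (dyadicD (proj2_sig x) (proj2_sig y)).
Definition dyopp (x : dyadic) : dyadic := exist _ (- sval x) (dyadicN (proj2_sig x)).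

Definition frac (q : rat) : rat := q - (Num.floor q)%:~R.

Lemma frac_dyadic q : dyadicP q -> dyadicP (frac q).
Proof. by move=> h; apply: dyadicD h (dyadicN (dyadic_int _)). Qed.

Lemma frac_range q : 0 <= frac q < 1.
Proof.
rewrite /frac subr_ge0 floor_le /= ltrBlDr addrC.
by have := floorD1_gt q; rewrite intrD.
Qed.

(* Z(2^oo) realized as dyadic rationals in [0,1) with addition mod 1 *)
Definition Z2inf := {q : rat | dyadicP q /\ 0 <= q < 1}.
Definition tofrac (q : rat) (h : dyadicP q) : Z2inf :=
  exist _ (frac q) (conj (frac_dyadic h) (frac_range q)).
Definition z0 : Z2inf := tofrac (dyadic_int 0).
Definition zadd (x y : Z2inf) : Z2inf :=
  tofrac (dyadicD (proj1 (proj2_sig x)) (proj1 (proj2_sig y))).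
Definition zopp (x : Z2inf) : Z2inf := tofrac (dyadicN (proj1 (proj2_sig x))).

Definition ZK (K : nat) := 'I_K -> int.
Definition ZK0 K : ZK K := fun _ => 0.
Definition ZKadd K (a b : ZK K) : ZK K := fun j => a j + b j.
Definition ZKopp K (a : ZK K) : ZK K := fun j => - a j.

Definition DK (K : nat) := 'I_K -> dyadic.
Definition DK0 K : DK K := fun _ => dy0.
Definition DKadd K (a b : DK K) : DK K := fun j => dyadd (a j) (b j).
Definition DKopp K (a : DK K) : DK K := fun j => dyopp (a j).

Definition QK (K : nat) := 'I_K -> Z2inf.
Definition QK0 K : QK K := fun _ => z0.
Definition QKadd K (a b : QK K) : QK K := fun j => zadd (a j) (b j).
Definition QKopp K (a : QK K) : QK K := fun j => zopp (a j).

Definition inclK K (a : ZK K) : DK K := fun j => exist _ (a j)%:~R (dyadic_int (a j)).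
Definition projK K (g : DK K) : QK K := fun j => tofrac (proj2_sig (g j)).

(* Give ℤ the norm |a|, ℤ(2^∞) the norm den(c) - 1 and ℤ[1/2] the norm
   ⌈|x|⌉ + den(x) - 1, summed over the K coordinates.  Balls are finite since
   bounding ⌈|x|⌉ and den(x) bounds the numerator as well, and den - 1 is
   subadditive because the denominator of a sum of dyadic rationals is at most
   the larger of the two denominators.  The splitting x ↦ (⌊x⌋, x - ⌊x⌋) is a
   bijection ℤ[1/2] → ℤ × ℤ(2^∞) that does not increase distances, and its
   inverse (a, c) ↦ a + c increases them by at most 1 per coordinate; it maps
   i(a) to (a, 0) and its second component is π. *)

Set Warnings "-notation-overridden,-ambiguous-paths,-notation-incompatible-prefix".
From Pilot Require Import Defs.
From Stdlib Require Import Reals List ProofIrrelevance FunctionalExtensionality Classical_Prop.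
From mathcomp Require Import all_boot all_order all_algebra.
From mathcomp Require Import zify ring lra.
Set Implicit Arguments. Unset Strict Implicit. Unset Printing Implicit Defensive.
Import Order.TTheory GRing.Theory Num.Theory.

Local Open Scope ring_scope.

Definition den (q : rat) : nat := `|denq q|%N.

Lemma den_gt0 q : (0 < den q)%N.
Proof. by rewrite /den absz_gt0 denq_neq0. Qed.

Lemma natr_den q : (den q)%:R = (denq q)%:~R :> rat.
Proof. by rewrite /den -[(denq q)%:~R]/((denq q)%:~R) -(absz_denq q). Qed.

Lemma den_dvdn q (d : nat) : (den q %| d)%N = (q * d%:R \is a Num.int).
Proof.
have hq : (numq q)%:~R = q * (denq q)%:~R := numqE q.
apply/idP/idP.
- case/dvdnP=> c ->; rewrite natrM natr_den mulrCA -hq.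
  by rewrite rpredM // ?rpred_nat ?rpred_int.
- case/intrP=> n hn.
  have e : numq q * d%:Z = n * denq q.
    apply: (@intr_inj rat); rewrite !rmorphM /= hq -hn.
    by rewrite -!mulrA; congr (_ * _); rewrite mulrC.
  have : (den q %| `|numq q|%N * d)%N.
    have -> : (`|numq q| * d = `|n| * den q)%N.
      by have := congr1 absz e; rewrite !abszM /=.
    by rewrite dvdn_mull.
  by rewrite Gauss_dvdr // coprime_sym coprime_num_den.
Qed.

Lemma mulr_den_int q : q * (den q)%:R \is a Num.int.
Proof. by rewrite -den_dvdn. Qed.

Lemma den_addr_int q (n : int) : den (q + n%:~R) = den q.
Proof.
have shift (r : rat) (m : int) (d : nat) :
    ((r + m%:~R) * d%:R \is a Num.int) = (r * d%:R \is a Num.int).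
  by rewrite mulrDl rpredDr // rpredM ?rpred_int ?rpred_nat.
apply/eqP; rewrite eqn_dvd !den_dvdn -(shift q n) mulr_den_int /=.
by rewrite -(shift _ (- n)) rmorphN /= addrK mulr_den_int.
Qed.

Lemma denN q : den (- q) = den q.
Proof. by rewrite /den denqN. Qed.

Lemma den1_int q : den q = 1%N -> q = (Num.floor q)%:~R.
Proof.
move=> h; have : q * 1%:R \is a Num.int by rewrite -den_dvdn h.
by rewrite mulr1 => /floorK ->.
Qed.

Lemma fracE q : Defs.frac q = q + (- Num.floor q)%:~R.
Proof. by rewrite /frac rmorphN. Qed.

Lemma den_frac q : den (Defs.frac q) = den q.
Proof. by rewrite fracE den_addr_int. Qed.

Lemma den_fracDl u v : den (Defs.frac u + v) = den (u + v).
Proof. by rewrite fracE addrAC den_addr_int. Qed.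

Lemma den_fracDr u v : den (u + Defs.frac v) = den (u + v).
Proof. by rewrite fracE addrA den_addr_int. Qed.

Lemma den_fracND u v : den (- Defs.frac u + v) = den (- u + v).
Proof. by rewrite fracE opprD addrAC -rmorphN /= den_addr_int. Qed.

Lemma den_dyadic q : dyadicP q -> exists k, den q = (2 ^ k)%N.
Proof.
case=> k hk; have : (den q %| 2 ^ k)%N by rewrite den_dvdn natrX.
by case/dvdn_pfactor=> // m _ ->; exists m.
Qed.

(* False for general rationals (1/2 + 1/3 = 5/6); for dyadics one denominator divides the other. *)
Lemma den_addD x y : dyadicP x -> dyadicP y ->
  (den (x + y) <= maxn (den x) (den y))%N.
Proof.
move=> /den_dyadic [i hi] /den_dyadic [j hj].
have common b : (den x %| b)%N -> (den y %| b)%N -> (0 < b)%N ->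
    (den (x + y) <= b)%N.
  move=> hx hy hb; apply: dvdn_leq => //.
  by rewrite den_dvdn mulrDl rpredD // -den_dvdn.
case: (leqP i j) => hij.
- apply: leq_trans (leq_maxr _ _); apply: common (den_gt0 _) => //.
  by rewrite hi hj dvdn_exp2l.
- apply: leq_trans (leq_maxl _ _); apply: common (den_gt0 _) => //.
  by rewrite hi hj dvdn_exp2l // ltnW.
Qed.

Definition ceil_abs (q : rat) : nat := `|Num.ceil `|q| |%N.

Lemma ceil_absE q : (ceil_abs q)%:Z = Num.ceil `|q|.
Proof. by rewrite /ceil_abs abszE ger0_norm // ceil_ge0 (lt_le_trans _ (normr_ge0 q)). Qed.

Lemma ceil_absD x y : (ceil_abs (x + y) <= ceil_abs x + ceil_abs y)%N.
Proof.
rewrite -lez_nat PoszD !ceil_absE ceil_le_int rmorphD /=.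
by apply: le_trans (ler_normD x y) _; apply: lerD; apply: ceil_ge.
Qed.

Lemma ceil_absN x : ceil_abs (- x) = ceil_abs x.
Proof. by rewrite /ceil_abs normrN. Qed.

Lemma ceil_abs0 : ceil_abs 0 = 0%N.
Proof. by rewrite /ceil_abs normr0 ceil0. Qed.

Lemma ceil_abs_eq0 x : ceil_abs x = 0%N -> x = 0.
Proof.
move=> h; have : Num.ceil `|x| <= 0 by rewrite -ceil_absE h.
by rewrite ceil_le0 normr_le0 => /eqP.
Qed.

Lemma ceil_abs_le1 q : 0 <= q < 1 -> (ceil_abs q <= 1)%N.
Proof. by case/andP=> q0 q1; rewrite -lez_nat ceil_absE ceil_le_int ger0_norm // ltW. Qed.

Lemma floor_dist_le (x y : rat) :
  (`|(- Num.floor x + Num.floor y)%R|%N <= ceil_abs (- x + y))%N.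
Proof.
rewrite -lez_nat ceil_absE abszE.
have h1 := floor_le x; have h2 := floor_le y.
have h3 := floorD1_gt x; have h4 := floorD1_gt y.
set a := Num.floor x in h1 h3 *; set b := Num.floor y in h2 h4 *.
have hn : x - y <= `|- x + y| by rewrite -normrN opprD opprK ler_norm.
have hp : - x + y <= `|- x + y| by exact: ler_norm.
rewrite !rmorphD !rmorph1 /= in h3 h4.
rewrite ler_norml; apply/andP; split.
- have : a - b - 1 < Num.ceil `|- x + y| by rewrite ceil_gt_int !rmorphB !rmorph1 /=; lra.
  lia.
- have : b - a - 1 < Num.ceil `|- x + y| by rewrite ceil_gt_int !rmorphB !rmorph1 /=; lra.
  lia.
Qed.

Lemma ceil_abs_dist_le (a a' : int) q q' : 0 <= q < 1 -> 0 <= q' < 1 ->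
  (ceil_abs (- (a%:~R + q) + (a'%:~R + q')) <= `|(- a + a')%R|%N + 1)%N.
Proof.
move=> /andP[q0 q1] /andP[q'0 q'1].
rewrite -lez_nat ceil_absE PoszD abszE ceil_le_int rmorphD /= rmorph1.
rewrite (@intr_norm rat (- a + a')).
have -> : - (a%:~R + q) + (a'%:~R + q') = ((- a + a')%:~R : rat) + (q' - q).
  by rewrite rmorphD rmorphN /=; ring.
apply: le_trans (ler_normD _ _) _; apply: lerD => //.
by rewrite ler_norml; apply/andP; split; lra.
Qed.

Lemma mem_In (T : eqType) (x : T) (s : seq T) : x \in s -> In x s.
Proof.
elim: s => //= y s IH; rewrite inE => /orP[/eqP ->|/IH]; by [left | right].
Qed.

Lemma INR_le_up (n : nat) (r : R) : Rle (INR n) r -> (n <= Z.to_nat (up r))%N.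
Proof.
move=> h; have [h1 _] := archimed r.
have : Rlt (IZR (Z.of_nat n)) (IZR (up r)).
  by rewrite -INR_IZR_INZ; exact: Rle_lt_trans h h1.
move/lt_IZR; lia.
Qed.

Lemma fun_list (T : Type) (L : list T) K :
  exists l : list ('I_K -> T), forall g, (forall j, In (g j) L) -> In g l.
Proof.
elim: K => [|K [l IH]].
  exists [:: fun j : 'I_0 => False_rect T (ltac:(by case: j))] => g _.
  by left; apply: functional_extensionality; case.
pose cons_fun (a : T) (h : 'I_K -> T) (j : 'I_K.+1) :=
  if unlift ord0 j is Some j' then h j' else a.
exists (flat_map (fun a => map (cons_fun a) l) L) => g hg.
apply/in_flat_map; exists (g ord0); split; first exact: hg.
apply/in_map_iff; exists (fun j => g (lift ord0 j)); split; last exact: IH.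
by apply: functional_extensionality => j; rewrite /cons_fun; case: unliftP => [j'|] ->.
Qed.

Lemma sig_list (P : rat -> Prop) (l : list rat) :
  exists l' : list {q : rat | P q}, forall x, In (sval x) l -> In x l'.
Proof.
elim: l => [|a l [l' IH]]; first by exists nil.
case: (classic (P a)) => [Pa|nPa].
- exists (exist _ a Pa :: l') => [[x Px]] /= [e|hx]; last by right; exact: (IH (exist _ x Px)).
  by left; subst; rewrite (proof_irrelevance _ Px Pa).
- exists l' => [[x Px]] /= [e|hx]; first by subst.
  exact: (IH (exist _ x Px)).
Qed.

Lemma int_ball_list (B : nat) :
  exists l : list int, forall a : int, (`|a|%N <= B)%N -> In a l.
Proof.
exists [seq (i%:Z - B%:Z)%R | i <- iota 0 (B + B).+1] => a ha; apply: mem_In.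
apply/mapP; exists `|(a + B%:Z)%R|%N; first by rewrite mem_iota; lia.
lia.
Qed.

Lemma numq_le (q : rat) : (`|numq q|%N <= ceil_abs q * den q)%N.
Proof.
rewrite -lez_nat -(ler_int rat) PoszM !rmorphM /= ceil_absE abszE.
rewrite (@intr_norm rat) numqE normrM -natr_den normr_nat.
by apply: ler_wpM2r => //; apply: ceil_ge.
Qed.

Lemma rat_ball_list (B : nat) : exists l : list rat,
  forall q : rat, (ceil_abs q <= B)%N -> (den q <= B)%N -> In q l.
Proof.
pose M := (B * B)%N.
exists [seq (n%:~R / d%:R : rat) | n <- [seq (i%:Z - M%:Z) | i <- iota 0 (M + M).+1],
                                 d <- iota 1 B].
move=> q hc hd; apply: mem_In.
have hn : (`|numq q|%N <= M)%N by apply: leq_trans (numq_le q) (leq_mul _ _).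
rewrite -[X in X \in _]divq_num_den -natr_den; apply: allpairs_f.
- apply/mapP; exists `|(numq q + M%:Z)%R|%N; first by rewrite mem_iota; lia.
  lia.
- by have := den_gt0 q; rewrite mem_iota; lia.
Qed.

Definition proper_nat_norm (T : Type) (z : T) (add : T -> T -> T) (opp : T -> T)
    (n : T -> nat) : Prop :=
  [/\ forall x, n x = 0%N <-> x = z, forall x, n (opp x) = n x,
      forall x y, (n (add x y) <= n x + n y)%N &
      forall B, exists l : list T, forall x, (n x <= B)%N -> In x l].

Definition sum_norm (T : Type) K (n : T -> nat) (g : 'I_K -> T) : R :=
  INR (\sum_(j < K) n (g j))%N.

Lemma proper_norm_sum (T : Type) K (z : T) add opp (n : T -> nat) :
  proper_nat_norm z add opp n ->
  proper_norm (fun _ : 'I_K => z) (fun a b j => add (a j) (b j)) (fun a j => opp (a j))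
    (sum_norm n).
Proof.
case=> n0 nN nD nfin; rewrite /sum_norm; split.
- move=> g; split=> [h|->]; last by rewrite big1 // => j _; apply/n0.
  have hs : (\sum_(j < K) n (g j) = 0)%N by apply: INR_eq; rewrite h.
  apply: functional_extensionality => j; apply/n0.
  by move: hs; rewrite (bigD1 j) //=; lia.
- by move=> g; f_equal; apply: eq_bigr => j _.
- move=> g h; rewrite -plus_INR; apply/le_INR/ssrnat.leP.
  by rewrite plusE -big_split; apply: leq_sum => j _.
- move=> r; have [L hL] := nfin (Z.to_nat (up r)).
  have [l hl] := fun_list L K; exists l => g hg; apply: hl => j; apply: hL.
  apply: leq_trans (INR_le_up hg).
  by rewrite (bigD1 j) //= leq_addr.
Qed.

Lemma sval_inj (P : rat -> Prop) (x y : {q : rat | P q}) : sval x = sval y -> x = y.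
Proof. exact: (eq_sig_hprop (fun q => proof_irrelevance (P q)) x y). Qed.

Lemma sval_z0 : sval z0 = 0.
Proof. by rewrite /= fracE floor0 oppr0 addr0. Qed.

Definition norm_int (a : int) : nat := `|a|%N.
Definition norm_dyadic (x : dyadic) : nat := (ceil_abs (sval x) + (den (sval x)).-1)%N.
Definition norm_Z2inf (c : Z2inf) : nat := (den (sval c)).-1.

Lemma proper_norm_int : proper_nat_norm 0 +%R (fun a => - a) norm_int.
Proof.
rewrite /norm_int; split=> [a|a|a b|B]; last exact: int_ball_list.
- by split=> [/eqP|->//]; rewrite absz_eq0 => /eqP.
- exact: abszN.
- lia.
Qed.

Lemma proper_norm_dyadic : proper_nat_norm dy0 dyadd dyopp norm_dyadic.
Proof.
rewrite /norm_dyadic; split=> [[x Px]|x|[x Px] [y Py]|B] /=.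
- split=> [h|/(congr1 sval) /= ->]; last by rewrite ceil_abs0.
  by apply: sval_inj => /=; apply: ceil_abs_eq0; lia.
- by rewrite ceil_absN denN.
- have := ceil_absD x y; have := den_addD Px Py.
  have := den_gt0 x; have := den_gt0 y; lia.
- have [l hl] := rat_ball_list B.+1; have [l' hl'] := sig_list dyadicP l.
  exists l' => x hx; apply/hl'/hl; first lia.
  by have := den_gt0 (sval x); lia.
Qed.

Lemma proper_norm_Z2inf : proper_nat_norm z0 zadd zopp norm_Z2inf.
Proof.
rewrite /norm_Z2inf; split=> [[x Px]|x|[x [Px _]] [y [Py _]]|B] /=.
- split=> [h|/(congr1 sval) /= ->]; last by rewrite den_frac.
  have hx : den x = 1%N by have := den_gt0 x; lia.
  apply: sval_inj; rewrite sval_z0 /= (den1_int hx).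
  case: Px => _ /andP[x0 x1].
  by apply/eqP; rewrite intr_eq0 eq_le floor_le0 floor_ge0 x0 x1.
- by rewrite den_frac denN.
- rewrite den_frac; have := den_addD Px Py.
  have := den_gt0 x; have := den_gt0 y; lia.
- have [l hl] := rat_ball_list B.+1.
  have [l' hl'] := sig_list (fun q => dyadicP q /\ 0 <= q < 1) l.
  exists l' => x hx; apply/hl'/hl.
  + by case: x hx => q [_ /ceil_abs_le1 q01] /= _; lia.
  + by have := den_gt0 (sval x); lia.
Qed.

Lemma norm_Z2inf_dist c c' : norm_Z2inf (zadd (zopp c) c') = (den (- sval c + sval c')).-1.
Proof. by rewrite /norm_Z2inf /= den_frac den_fracDl. Qed.

Lemma Z2inf_range (c : Z2inf) : 0 <= sval c < 1.
Proof. exact: proj2 (proj2_sig c). Qed.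

Lemma floorDZ2inf (a : int) (c : Z2inf) : Num.floor (a%:~R + sval c) = a.
Proof.
have /andP[c0 c1] := Z2inf_range c.
by apply: floor_def; rewrite rmorphD rmorph1 /= lerDl c0 ltrD2l c1.
Qed.

Definition split_dyadic K (g : DK K) : ZK K * QK K :=
  (fun j => Num.floor (sval (g j)), projK g).

Definition join_dyadic K (p : ZK K * QK K) : DK K := fun j =>
  exist _ ((p.1 j)%:~R + sval (p.2 j))
    (dyadicD (dyadic_int (p.1 j)) (proj1 (proj2_sig (p.2 j)))).

Lemma split_dyadicK K : cancel (@split_dyadic K) (@join_dyadic K).
Proof.
move=> g; apply: functional_extensionality => j; apply: sval_inj => /=.
by rewrite /Defs.frac addrC subrK.
Qed.

Lemma join_dyadicK K : cancel (@join_dyadic K) (@split_dyadic K).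
Proof.
case=> a c; congr pair; apply: functional_extensionality => j /=.
  exact: floorDZ2inf.
apply: sval_inj; rewrite /= /Defs.frac floorDZ2inf; ring.
Qed.

Lemma split_dyadic_incl K (a : ZK K) : split_dyadic (inclK a) = (a, @QK0 K).
Proof.
congr pair; apply: functional_extensionality => j /=; first exact: intrKfloor.
by apply: sval_inj; rewrite sval_z0 /= /Defs.frac intrKfloor subrr.
Qed.

Lemma split_dist_le (x y : dyadic) :
  (norm_int (- Num.floor (sval x) + Num.floor (sval y)) +
   norm_Z2inf (zadd (zopp (Defs.tofrac (proj2_sig x))) (Defs.tofrac (proj2_sig y)))
   <= norm_dyadic (dyadd (dyopp x) y))%N.
Proof.
rewrite norm_Z2inf_dist /= den_fracND den_fracDr /norm_dyadic /norm_int /=.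
by rewrite leq_add2r floor_dist_le.
Qed.

Lemma join_dist_le K (p p' : ZK K * QK K) j :
  (norm_dyadic (dyadd (dyopp (join_dyadic p j)) (join_dyadic p' j))
   <= norm_int (- p.1 j + p'.1 j) + norm_Z2inf (zadd (zopp (p.2 j)) (p'.2 j)) + 1)%N.
Proof.
rewrite norm_Z2inf_dist /norm_dyadic /norm_int /=.
have := ceil_abs_dist_le (p.1 j) (p'.1 j) (Z2inf_range (p.2 j)) (Z2inf_range (p'.2 j)).
have -> : - ((p.1 j)%:~R + sval (p.2 j)) + ((p'.1 j)%:~R + sval (p'.2 j))
   = (- sval (p.2 j) + sval (p'.2 j)) + (- p.1 j + p'.1 j)%:~R.
  by rewrite rmorphD rmorphN /=; ring.
rewrite den_addr_int; lia.
Qed.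

Lemma sum_normD (T1 T2 : Type) K (n1 : T1 -> nat) (n2 : T2 -> nat) g1 g2 :
  Rplus (sum_norm n1 g1) (sum_norm n2 g2) = INR (\sum_(j < K) (n1 (g1 j) + n2 (g2 j)))%N.
Proof. by rewrite /sum_norm -plus_INR plusE big_split. Qed.

Lemma INR_sum_le K (F G : 'I_K -> nat) (c : nat) : (forall j, F j <= G j + c)%N ->
  Rle (INR (\sum_(j < K) F j)%N) (Rplus (INR (\sum_(j < K) G j)%N) (INR (K * c))).
Proof.
move=> le_FG; rewrite -plus_INR; apply/le_INR/ssrnat.leP; rewrite plusE.
rewrite -[X in (_ <= _ + X * c)%N]card_ord -sum_nat_const -big_split.
exact: leq_sum.
Qed.

Lemma sum_norm_eq0 (T : Type) K (n : T -> nat) (g : 'I_K -> T) :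
  (forall j, n (g j) = 0%N) -> sum_norm n g = R0.
Proof. by move=> h; rewrite /sum_norm big1. Qed.

Lemma coarse_map_of_le (X Y : Type) (dX : X -> X -> R) (dY : Y -> Y -> R) (f : X -> Y) C :
  (forall x y, Rle (dY (f x) (f y)) (Rplus (dX x y) C)) -> coarse_map dX dY f.
Proof.
move=> h delta; exists (Rplus delta C) => x y hxy.
exact: Rle_trans (h x y) (Rplus_le_compat_r _ _ _ hxy).
Qed.

Lemma bounded_dist_diag (X Y : Type) (dY : Y -> Y -> R) (u v : X -> Y) :
  (forall y, dY y y = R0) -> u =1 v -> bounded_dist dY u v.
Proof. by move=> d0 uv; exists R0 => x; rewrite uv d0; apply: Rle_refl. Qed.

Theorem mainTheorem17 (K : nat) (hK : (1 <= K)%N) :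
  coarsely_split (@ZK0 K) (@ZKadd K) (@ZKopp K)
                 (@DK0 K) (@DKadd K) (@DKopp K)
                 (@QK0 K) (@QKadd K) (@QKopp K)
                 (@inclK K) (@projK K).
Proof.
(* The argument works for every K, including K = 0. *)
exists (sum_norm norm_int), (sum_norm norm_dyadic), (sum_norm norm_Z2inf).
split; [exact: proper_norm_sum proper_norm_int | exact: proper_norm_sum proper_norm_dyadic |
         exact: proper_norm_sum proper_norm_Z2inf |].
exists (@split_dyadic K) => dA dG dQ.
have dG0 x : dG x x = R0 by apply: sum_norm_eq0 => j; rewrite /norm_dyadic /DKadd /DKopp /= addNr ceil_abs0.
have dQ0 c : dQ c c = R0 by apply: sum_norm_eq0 => j; rewrite /QKadd /QKopp norm_Z2inf_dist addNr.
have dAQ0 p : l1_dist dA dQ p p = R0.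
  rewrite /l1_dist dQ0 Rplus_0_r; apply: sum_norm_eq0 => j; by rewrite /norm_int /ZKadd /ZKopp addNr.
split; [split|..].
- apply: (coarse_map_of_le (C := INR (K * 0))) => x y.
  by rewrite /l1_dist sum_normD; apply: INR_sum_le => j; rewrite addn0; exact: split_dist_le.
- exists (@join_dyadic K); split; [|split].
  + apply: (coarse_map_of_le (C := INR (K * 1))) => p p'.
    rewrite /l1_dist sum_normD; apply: INR_sum_le => j; exact: join_dist_le.
  + exact: bounded_dist_diag dG0 (split_dyadicK (K := K)).
  + exact: bounded_dist_diag dAQ0 (join_dyadicK (K := K)).
- exact: bounded_dist_diag dAQ0 (split_dyadic_incl (K := K)).
- exact: bounded_dist_diag dQ0 (fun g => erefl).
Qed.
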